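(* Let $(X,d)$ be a complete metric space and $f:X\to\mathbb{R}\cup\{+\infty\}$ a proper lower semicontinuous function with $\inf_Xf=0$. Then $f=\mathrm{lsc}(\mathcal{I}[f])$ on $X$, where \[\mathcal{I}[f](x):=\inf\Big\{\sum_{n=0}^\infty G[f](x_n)d(x_n,x_{n+1}):\{x_n\}_n\subset X,\ x_0=x,\ \lim_{n\to\infty}G[f](x_n)=0\Big\}.\]
   Context: Global slope: $G[f](x)=\sup_{y\neq x}\frac{(f(x)-f(y))_+}{d(x,y)}$ if $f(x)<+\infty$ and $G[f](x)=+\infty$ otherwise ($\alpha_+=\max\{\alpha,0\}$). For $g:X\to\mathbb{R}\cup\{+\infty\}$, its lower semicontinuous envelope is $\mathrm{lsc}(g)(x)=\liminf_{y\to x}g(y)$ (with $y=x$ allowed). Proper means not identically $+\infty$. *)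

From HB Require Import structures.
From mathcomp Require Import all_boot all_order all_algebra.
From mathcomp Require Import all_classical all_reals all_analysis.
Set Implicit Arguments. Unset Strict Implicit. Unset Printing Implicit Defensive.
Import Order.TTheory GRing.Theory Num.Theory.
Local Open Scope classical_set_scope.
Local Open Scope ring_scope.

Definition is_metric (R : realType) (X : Type) (d : X -> X -> R) : Prop :=
  (forall x y, 0 <= d x y) /\
  (forall x y, d x y = 0 <-> x = y) /\
  (forall x y, d x y = d y x) /\
  (forall x y z, d x z <= d x y + d y z).

Definition complete_metric (R : realType) (X : Type) (d : X -> X -> R) : Prop :=
  forall u : nat -> X,
    (forall e : R, 0 < e -> exists N : nat, forall m n : nat,
        (N <= m)%N -> (N <= n)%N -> d (u m) (u n) < e) ->
    exists l : X, forall e : R, 0 < e -> exists N : nat, forall n : nat,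
        (N <= n)%N -> d (u n) l < e.

Local Open Scope ereal_scope.

(* lsc(g)(x) = liminf_{y -> x} g(y) (y = x allowed)
            = sup_{r > 0} inf_{d(y,x) < r} g(y) *)
Definition lsc_env (R : realType) (X : Type) (d : X -> X -> R)
  (g : X -> \bar R) (x : X) : \bar R :=
  ereal_sup [set ereal_inf [set g y | y in [set y | (d y x < r)%R]]
            | r in [set r : R | (0 < r)%R]].

Definition lsc_fun (R : realType) (X : Type) (d : X -> X -> R)
  (g : X -> \bar R) : Prop :=
  forall x, g x <= lsc_env d g x.

(* Global slope G[f](x) = sup_{y <> x} (f x - f y)_+ / d(x,y) if f x < +oo,
   +oo otherwise.  (The max with 0 only matters when X is a singleton.) *)
Definition global_slope (R : realType) (X : Type) (d : X -> X -> R)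
  (f : X -> \bar R) (x : X) : \bar R :=
  if f x == +oo then +oo
  else maxe 0 (ereal_sup [set maxe (f x - f y) 0 * ((d x y)^-1)%:E
                         | y in [set y | y <> x]]).

Definition I_fun (R : realType) (X : Type) (d : X -> X -> R)
  (f : X -> \bar R) (x : X) : \bar R :=
  ereal_inf [set \sum_(0 <= n <oo) (global_slope d f (xs n) * (d (xs n) (xs n.+1))%:E)
            | xs in [set xs : nat -> X | xs 0%N = x /\
                      (fun n => global_slope d f (xs n)) @ \oo --> (0 : \bar R)]].

From HB Require Import structures.
From mathcomp Require Import all_boot all_order all_algebra.
From mathcomp Require Import all_classical all_reals all_analysis.
From mathcomp Require Import ring lra.
Set Implicit Arguments. Unset Strict Implicit. Unset Printing Implicit Defensive.
Import Order.TTheory GRing.Theory Num.Theory.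
Local Open Scope classical_set_scope.
Local Open Scope ereal_scope.

(* Along an admissible sequence the global slope gives
   f(x_k) <= f(x_(k+1)) + G(x_k) d(x_k, x_(k+1)) and f(x_N) <= f(z) + G(x_N) d(x_N, z),
   so f(x_0) <= sum_n G(x_n) d(x_n, x_(n+1)) + f(z) as soon as G(x_N) d(x_N, z) is small
   for infinitely many N.  It is: otherwise G(x_N) >= c / D_N with D_N = d(x_N, z), so
   D_N -> +oo because G(x_N) -> 0, and as D_(N+1) - D_N <= d(x_N, x_(N+1)) the weighted
   length dominates c (ln D_N - ln D_0).  Hence f <= I[f], so f <= lsc(I[f]) since f is
   lower semicontinuous.
   Conversely, near a point x with f(x) < +oo, Ekeland's variational principle applied
   with the constants lam q^n (0 < q < 1) produces a sequence y_n with
   G(y_n) <= lam q^n -> 0 and lam q^(n+1) d(y_n, y_(n+1)) <= f(y_n) - f(y_(n+1)); its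
   weighted length telescopes to at most f(y_0) / q <= f(x) / q, and q -> 1. *)

Lemma dependent_choice_inv (T : Type) (Inv : nat -> T -> Prop)
    (P : nat -> T -> T -> Prop) (x0 : T) :
  Inv 0%N x0 -> (forall n x, Inv n x -> exists2 y, Inv n.+1 y & P n x y) ->
  exists u : nat -> T, u 0%N = x0 /\ forall n, Inv n (u n) /\ P n (u n) (u n.+1).
Proof.
move=> inv0 step.
have /choice[next nextP] : forall p : T * nat,
    exists y, Inv p.2 p.1 -> Inv p.2.+1 y /\ P p.2 p.1 y.
  move=> p; have [/step[y ? ?]|nInv] := pselect (Inv p.2 p.1); first by exists y.
  by exists p.1 => /nInv.
pose u := fix u n := if n is k.+1 then next (u k, k) else x0.
have invu n : Inv n (u n) by elim: n => // n /(nextP (u n, n))[].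
by exists u; split => // n; split => //; exact: (nextP (u n, n) (invu n)).2.
Qed.

Local Open Scope ring_scope.

Lemma ln_diff_le_sum_rel_increments (R : realType) (D : nat -> R) n m :
  (n <= m)%N -> (forall k, (n <= k)%N -> 0 < D k) ->
  ln (D m) - ln (D n) <= \sum_(n <= k < m) (D k.+1 - D k) / D k.
Proof.
move=> + Dpos; elim: m => [|m IH].
  by rewrite leqn0 => /eqP->; rewrite subrr big_geq.
rewrite leq_eqVlt ltnS => /orP[/eqP<-|nm]; first by rewrite subrr big_geq.
have [Dm DSm] : 0 < D m /\ 0 < D m.+1 by split; apply: Dpos; rewrite // leqW.
rewrite big_nat_recr //= -(subrKA (ln (D m))) addrC lerD ?IH //.
rewrite -ln_div ?posrE // mulrBl divff ?gt_eqF //.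
have := @le_ln1Dx _ (D m.+1 / D m - 1); rewrite [1 + _]addrC subrK; apply.
by rewrite ltrBrDl subrr divr_gt0.
Qed.

Lemma frequently_mul_le_of_bounded_sum (R : realType) (g D l : nat -> R) (B c : R) :
  (forall k, 0 <= g k) -> (forall k, 0 <= l k) -> g @ \oo --> 0 ->
  (forall k, D k.+1 <= D k + l k) ->
  (forall m, \sum_(0 <= k < m) g k * l k <= B) -> 0 < c ->
  forall N, exists2 k, (N <= k)%N & g k * D k <= c.
Proof.
move=> g0 l0 g_cvg Dl sumB c0 N.
have [//|small] := pselect (exists2 k, (N <= k)%N & g k * D k <= c).
have {}big k : (N <= k)%N -> c < g k * D k.
  by move=> Nk; rewrite ltNge; apply/negP => ?; apply: small; exists k.
have Dpos k : (N <= k)%N -> 0 < D k.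
  move=> /big; apply: contraTlt => D0.
  by rewrite -leNgt (le_trans _ (ltW c0)) // mulr_ge0_le0.
have term k : (N <= k)%N -> c * ((D k.+1 - D k) / D k) <= g k * l k.
  move=> Nk; rewrite mulrA ler_pdivrMr ?Dpos // mulrAC.
  apply: le_trans (ler_wpM2l (ltW c0) (_ : D k.+1 - D k <= l k)) _.
    by rewrite lerBlDl.
  by rewrite ler_wpM2r // ltW ?big.
have lnB m : (N <= m)%N -> c * (ln (D m) - ln (D N)) <= B.
  move=> Nm; apply: le_trans
    (ler_wpM2l (ltW c0) (ln_diff_le_sum_rel_increments Nm Dpos)) _.
  rewrite mulr_sumr; apply: le_trans (sumB m).
  rewrite (big_cat_nat (leq0n N) Nm) /= -[X in X <= _]add0r lerD //.
    by apply: sumr_ge0 => k _; exact: mulr_ge0.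
  by apply: ler_sum_nat => k /andP[Nk _]; exact: term.
pose M := expR (B / c + ln (D N)).
have M0 : 0 < M by exact: expR_gt0.
have [K _ gK] := (cvgrPdist_lt _ _).1 g_cvg (c / M) (divr_gt0 c0 M0).
pose k := maxn N K; have Nk : (N <= k)%N := leq_maxl N K.
have /gK : (K <= k)%N := leq_maxr N K.
rewrite /= sub0r normrN ger0_norm // => gk.
have MD : M < D k.
  rewrite ltNge; apply/negP => DM; have := ler_wpM2l (g0 k) DM.
  by rewrite leNgt => /negP; apply; apply: lt_trans (big k Nk); rewrite -ltr_pdivlMr.
have := lnB k Nk; rewrite leNgt -ltr_pdivrMl // mulrC ltrBrDr.
by rewrite -[X in X < _]expRK ltr_ln ?posrE ?Dpos // MD.
Qed.

Section Metric.
Variables (R : realType) (X : Type) (d : X -> X -> R).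
Hypothesis dm : is_metric d.

Lemma metric_ge0 x y : 0 <= d x y. Proof. by case: dm. Qed.

Lemma metric_eq0 x y : d x y = 0 <-> x = y. Proof. by case: dm => _ []. Qed.

Lemma metric_sym x y : d x y = d y x. Proof. by case: dm => _ [_ []]. Qed.

Lemma metric_triangle x y z : d x z <= d x y + d y z.
Proof. by case: dm => _ [_ [_]]. Qed.

Lemma metric_xx x : d x x = 0. Proof. exact/metric_eq0. Qed.

Lemma metric_gt0 x y : x <> y -> 0 < d x y.
Proof. by move=> xy; rewrite lt_def metric_ge0 andbT; apply/eqP => /metric_eq0. Qed.

End Metric.

Local Open Scope ereal_scope.

Section GlobalSlope.
Variables (R : realType) (X : Type) (d : X -> X -> R) (f : X -> \bar R).

Lemma global_slope_ge0 x : 0 <= global_slope d f x.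
Proof. by rewrite /global_slope; case: ifP => _; rewrite ?leey // le_max lexx. Qed.

Lemma global_slope_pinfty x : f x = +oo -> global_slope d f x = +oo.
Proof. by move=> fx; rewrite /global_slope fx eqxx. Qed.

Hypothesis dm : is_metric d.
Hypothesis fNy : forall x, f x != -oo.

Lemma le_add_global_slope x z : f x <= f z + global_slope d f x * (d x z)%:E.
Proof.
have [<-|xz] := pselect (x = z); first by rewrite metric_xx // mule0 adde0.
have dxz := metric_gt0 dm xz.
have [fx|fx] := eqVneq (f x) +oo.
  by rewrite global_slope_pinfty // gt0_mulye ?lte_fin // addey ?fNy ?leey.
have [fz|fz] := eqVneq (f z) +oo.
  have Gd : 0 <= global_slope d f x * (d x z)%:E.
    by rewrite mule_ge0 ?global_slope_ge0 // lee_fin ltW.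
  by rewrite fz addye ?leey // gt_eqF // (lt_le_trans ltNy0 Gd).
rewrite -leeBlDl ?fin_numE ?fNy //.
apply: le_trans (_ : maxe (f x - f z) 0 <= _); first by rewrite le_max lexx.
rewrite -lee_pdivrMr // /global_slope (negbTE fx) le_max; apply/orP; right.
by apply: ereal_sup_ubound; exists z => //; exact: nesym.
Qed.

Lemma global_slope_le x (lam : R) : f x != +oo -> (0 <= lam)%R ->
  (forall z, f x <= f z + (lam * d x z)%:E) -> global_slope d f x <= lam%:E.
Proof.
move=> fx lam0 lam_min; rewrite /global_slope (negbTE fx) ge_max lee_fin lam0 /=.
apply: ge_ereal_sup => _ [z /nesym xz <-].
have dxz := metric_gt0 dm xz.
rewrite lee_pdivrMr // ge_max -EFinM lee_fin mulr_ge0 ?metric_ge0 // andbT.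
have [->|fz] := eqVneq (f z) +oo; first by rewrite addeNy ?leNye.
by rewrite leeBlDl ?fin_numE ?fNy.
Qed.

Definition slope_step (xs : nat -> X) (n : nat) : \bar R :=
  global_slope d f (xs n) * (d (xs n) (xs n.+1))%:E.

Lemma slope_step_ge0 xs n : 0 <= slope_step xs n.
Proof. by rewrite mule_ge0 ?global_slope_ge0 // lee_fin metric_ge0. Qed.

Lemma le_slope_partial_sum xs N :
  f (xs 0%N) <= \sum_(0 <= k < N) slope_step xs k + f (xs N).
Proof.
elim: N => [|N IH]; first by rewrite big_geq // add0e.
apply: le_trans IH _; rewrite big_nat_recr //= -addeA leeD2l //.
by rewrite addeC le_add_global_slope.
Qed.

Lemma le_slope_series xs z :
  (fun n => global_slope d f (xs n)) @ \oo --> 0 ->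
  f (xs 0%N) <= \sum_(0 <= n <oo) slope_step xs n + f z.
Proof.
move=> G_cvg; set S := \sum_(0 <= n <oo) _.
have S_ge N : \sum_(0 <= k < N) slope_step xs k <= S.
  exact: nneseries_lim_ge (fun n _ _ => slope_step_ge0 xs n).
have S0 : 0 <= S by apply: nneseries_ge0 => n _ _; exact: slope_step_ge0.
have [->|fz] := eqVneq (f z) +oo.
  by rewrite addey ?leey // gt_eqF // (lt_le_trans ltNy0 S0).
have [->|Sy] := eqVneq S +oo; first by rewrite addye ?fNy ?leey.
have [s Ss] : exists s, S = s%:E by exists (fine S); rewrite fineK // ge0_fin_numE // ltey.
apply/lee_addgt0Pr => e e0.
have [[N0 _ Gfin] /= Gcvg] := (fine_cvgP _ _).1 G_cvg.
have weighted_sum_le m :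
    (\sum_(0 <= k < m) fine (global_slope d f (xs k)) * d (xs k) (xs k.+1) <= s)%R.
  rewrite -lee_fin -Ss -sumEFin; apply: le_trans (S_ge m); apply: lee_sum => k _.
  rewrite EFinM /slope_step; apply: lee_wpmul2r; first by rewrite lee_fin metric_ge0.
  by have := global_slope_ge0 (xs k); case: global_slope.
have dist_step k : (d (xs k.+1) z <= d (xs k) z + d (xs k) (xs k.+1))%R.
  by rewrite addrC [d (xs k) _]metric_sym // metric_triangle.
have [k N0k small] := frequently_mul_le_of_bounded_sum
  (fun k => fine_ge0 (global_slope_ge0 (xs k))) (fun k => metric_ge0 dm _ _) Gcvg
  dist_step weighted_sum_le e0 N0.
apply: le_trans (le_slope_partial_sum xs k) _.
rewrite -addeA; apply: leeD; first exact: S_ge.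
apply: le_trans (le_add_global_slope _ z) _; apply: leeD2l.
by rewrite -(fineK (Gfin k N0k)) -EFinM lee_fin.
Qed.

Lemma le_I_fun x : ereal_inf (range f) = 0 -> f x <= I_fun d f x.
Proof.
move=> inf0; apply: le_ereal_inf_tmp => _ [xs [<- G_cvg] <-].
apply/lee_addgt0Pr => e e0; have : ereal_inf (range f) < e%:E by rewrite inf0 lte_fin.
case/ereal_inf_lt => _ [z _ <-] fz.
exact: le_trans (le_slope_series z G_cvg) (leeD2l _ (ltW fz)).
Qed.

End GlobalSlope.

Section Ekeland.
Variables (R : realType) (X : Type) (d : X -> X -> R) (f : X -> \bar R) (lam : R).
Hypotheses (dm : is_metric d) (f_ge0 : forall x, 0 <= f x) (lam_gt0 : (0 < lam)%R).

Definition ekeland_set (u : X) : set X := [set z | f z + (lam * d u z)%:E <= f u].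

Lemma ekeland_set_refl u : ekeland_set u u.
Proof. by rewrite /ekeland_set /= metric_xx // mulr0 adde0. Qed.

Lemma ekeland_set_le u z : ekeland_set u z -> f z <= f u.
Proof.
by apply: le_trans; rewrite leeDl // lee_fin mulr_ge0 ?metric_ge0 // ltW.
Qed.

Lemma ekeland_set_trans u v z :
  ekeland_set u v -> ekeland_set v z -> ekeland_set u z.
Proof.
rewrite /ekeland_set /= => uv vz; apply: le_trans uv.
apply: le_trans (leeD2r _ vz); rewrite -addeA -EFinD leeD2l // lee_fin -mulrDr.
by rewrite ler_pM2l // addrC metric_triangle.
Qed.

Lemma ekeland_set_near_inf u (e : R) : f u != +oo -> (0 < e)%R ->
  exists2 v, ekeland_set u v & forall z, ekeland_set u z -> f v <= f z + e%:E.
Proof.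
move=> fu e0; pose m := ereal_inf [set f z | z in ekeland_set u].
have mu : m <= f u by apply: ereal_inf_lbound; exists u => //; exact: ekeland_set_refl.
have m_fin : m \is a fin_num.
  rewrite ge0_fin_numE ?(le_lt_trans mu) ?ltey //.
  by apply: le_ereal_inf_tmp => _ [z _ <-].
have : m < m + e%:E by rewrite lteDl // lte_fin.
case/ereal_inf_lt => _ [v uv <-] fv; exists v => // z uz.
by apply: le_trans (ltW fv) _; rewrite leeD2r //; apply: ereal_inf_lbound; exists z.
Qed.

Lemma ekeland_set_diam u v z (e : R) : f v != +oo ->
  (forall w, ekeland_set u w -> f v <= f w + e%:E) ->
  ekeland_set u v -> ekeland_set v z -> (lam * d v z <= e)%R.
Proof.
move=> fv v_min uv vz; have fz : f z \is a fin_num.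
  by rewrite ge0_fin_numE // (le_lt_trans (ekeland_set_le vz)) ?ltey.
have /v_min fv_le := ekeland_set_trans uv vz.
by rewrite -lee_fin -(leeD2lE _ _ fz) (le_trans vz).
Qed.

Hypothesis f_lsc : lsc_fun d f.

Lemma ekeland_set_closed u (w : nat -> X) y :
  (forall n, ekeland_set u (w n)) ->
  (forall e, (0 < e)%R -> exists N, forall n, (N <= n)%N -> (d (w n) y < e)%R) ->
  ekeland_set u y.
Proof.
move=> uw w_cvg; rewrite /ekeland_set /=.
have [->|fu] := eqVneq (f u) +oo; first exact: leey.
have fin_le z : f z <= f u -> f z = (fine (f z))%:E.
  by move=> zu; rewrite fineK // ge0_fin_numE // (le_lt_trans zu) ?ltey.
rewrite [f u]fin_le //; set a := fine (f u).
suff fy_le : f y <= (a - lam * d u y)%:E.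
  by apply: le_trans (leeD2r _ fy_le) _; rewrite -EFinD subrK.
apply/lee_addgt0Pr => e e0; apply: le_trans (f_lsc y) _.
apply: ge_ereal_sup => _ [r r0 <-].
have [N wN] : exists N, forall n, (N <= n)%N -> (d (w n) y < Num.min r (e / lam))%R.
  by apply: w_cvg; rewrite lt_min r0 divr_gt0.
have := wN N (leqnn N); rewrite lt_min => /andP[wr we].
apply: le_trans (ereal_inf_lbound _) _; first by exists (w N).
have := uw N; rewrite /ekeland_set /= [f (w N)]fin_le ?(ekeland_set_le (uw N)) //.
rewrite [f u]fin_le // -EFinD !lee_fin -/a.
have tri : (lam * d u y <= lam * d u (w N) + lam * d (w N) y)%R.
  by rewrite -mulrDr ler_pM2l // metric_triangle.
have : (lam * d (w N) y < e)%R by rewrite mulrC -ltr_pdivlMr.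
lra.
Qed.

Hypothesis X_complete : complete_metric d.

Lemma ekeland_nested_point (u : nat -> X) :
  (forall n, ekeland_set (u n) (u n.+1)) ->
  (forall r, (0 < r)%R -> exists n, forall a b,
     ekeland_set (u n) a -> ekeland_set (u n) b -> (d a b <= r)%R) ->
  exists y, (forall n, ekeland_set (u n) y) /\ (forall z, ekeland_set y z -> z = y).
Proof.
move=> u_nest u_diam.
have chain n m : (n <= m)%N -> ekeland_set (u n) (u m).
  elim: m => [|m IH]; first by rewrite leqn0 => /eqP->; exact: ekeland_set_refl.
  rewrite leq_eqVlt ltnS => /orP[/eqP->|nm]; first exact: ekeland_set_refl.
  exact: ekeland_set_trans (IH nm) (u_nest m).
have [y u_cvg] : exists y, forall e, (0 < e)%R ->
    exists N, forall n, (N <= n)%N -> (d (u n) y < e)%R.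
  apply: X_complete => e e0; have [N diamN] := u_diam _ (divr_gt0 e0 (ltr0Sn _ 1)).
  exists N => m n Nm Nn; apply: le_lt_trans (diamN _ _ (chain _ _ Nm) (chain _ _ Nn)) _.
  by rewrite ltr_pdivrMr // ltr_pMr // ltr1n.
have u_y n : ekeland_set (u n) y.
  apply: (@ekeland_set_closed _ (fun m => u (m + n)%N)) => [m|e /u_cvg[N uN]].
    exact: chain (leq_addl _ _).
  by exists N => m Nm; apply: uN; exact: leq_trans Nm (leq_addr _ _).
exists y; split => // z yz; apply/(metric_eq0 dm)/eqP.
rewrite eq_le metric_ge0 // andbT; apply/ler_addgt0Pr => r /u_diam[n diam_n].
by rewrite add0r diam_n //; exact: ekeland_set_trans (u_y n) yz.
Qed.

Lemma ekeland_principle x0 : f x0 != +oo ->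
  exists2 y, ekeland_set x0 y & forall z, f y <= f z + (lam * d y z)%:E.
Proof.
move=> fx0; pose e n : R := (n.+1%:R^-1)%R.
have e_gt0 n : (0 < e n)%R by rewrite invr_gt0.
have [u [u0 u_step]] : exists u : nat -> X, u 0%N = x0 /\ forall n,
    f (u n) != +oo /\ (ekeland_set (u n) (u n.+1) /\
    forall z, ekeland_set (u n) z -> f (u n.+1) <= f z + (e n)%:E).
  apply: (dependent_choice_inv (Inv := fun _ v => f v != +oo)
    (P := fun n v w => ekeland_set v w /\
            forall z, ekeland_set v z -> f w <= f z + (e n)%:E)) => // n v fv.
  have [w vw w_min] := ekeland_set_near_inf fv (e_gt0 n).
  by exists w => //; rewrite -ltey (le_lt_trans (ekeland_set_le vw)) ?ltey.
have u_diam r : (0 < r)%R -> exists n, forall a b,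
    ekeland_set (u n) a -> ekeland_set (u n) b -> (d a b <= r)%R.
  move=> r0; have [k ek] : exists k, (0 + e k < lam * r / 2)%R.
    by apply: ltr_add_invr; rewrite divr_gt0 ?mulr_gt0.
  exists k.+1 => a b ua ub; have [_ [uk u_min]] := u_step k.
  have da := ekeland_set_diam (u_step k.+1).1 u_min uk ua.
  have db := ekeland_set_diam (u_step k.+1).1 u_min uk ub.
  have tri : (lam * d a b <= lam * d (u k.+1) a + lam * d (u k.+1) b)%R.
    by rewrite -mulrDr ler_pM2l // [d _ a]metric_sym // metric_triangle.
  rewrite -(ler_pM2l lam_gt0); lra.
have [y [u_y y_uniq]] := ekeland_nested_point (fun n => (u_step n).2.1) u_diam.
exists y => [|z]; first by rewrite -u0.
rewrite leNgt; apply/negP => fz_lt.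
have /y_uniq zy : ekeland_set y z by exact: ltW.
by move: fz_lt; rewrite zy metric_xx // mulr0 adde0 ltxx.
Qed.

End Ekeland.

Section Approximation.
Variables (R : realType) (X : Type) (d : X -> X -> R) (f : X -> \bar R).
Hypotheses (dm : is_metric d) (X_complete : complete_metric d).
Hypotheses (f_lsc : lsc_fun d f) (f_ge0 : forall x, 0 <= f x).

Let fNy x : f x != -oo. Proof. by rewrite gt_eqF // (lt_le_trans ltNy0). Qed.

Let fin_fineK x : f x != +oo -> f x = (fine (f x))%:E.
Proof. by move=> fx; rewrite fineK // ge0_fin_numE ?ltey. Qed.

Lemma I_fun_le_div y0 (lam q : R) : f y0 != +oo -> (0 < lam)%R -> (0 < q < 1)%R ->
  (forall z, f y0 <= f z + (lam * d y0 z)%:E) -> I_fun d f y0 <= f y0 * (q^-1)%:E.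
Proof.
move=> fy0 lam0 /andP[q0 q1] y0_min; pose lam_ n := (lam * q ^+ n)%R.
have lam_gt0 n : (0 < lam_ n)%R by rewrite mulr_gt0 // exprn_gt0.
have [ys [ys0 ys_step]] : exists ys : nat -> X, ys 0%N = y0 /\ forall n,
    (f (ys n) != +oo /\ forall z, f (ys n) <= f z + (lam_ n * d (ys n) z)%:E) /\
    f (ys n.+1) + (lam_ n.+1 * d (ys n) (ys n.+1))%:E <= f (ys n).
  apply: (dependent_choice_inv
    (Inv := fun n v => f v != +oo /\ forall z, f v <= f z + (lam_ n * d v z)%:E)
    (P := fun n v w => f w + (lam_ n.+1 * d v w)%:E <= f v)).
    by split => // z; rewrite /lam_ expr0 mulr1.
  move=> n v [fv _].
  have [w vw w_min] := ekeland_principle dm f_ge0 (lam_gt0 n.+1) f_lsc X_complete fv.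
  by exists w => //; rewrite -ltey (le_lt_trans (ekeland_set_le dm (lam_gt0 n.+1) vw)) ?ltey.
have G_le n : global_slope d f (ys n) <= (lam_ n)%:E.
  by apply: global_slope_le => //; [exact: (ys_step n).1.1|exact: ltW|exact: (ys_step n).1.2].
pose F n := fine (f (ys n)).
have FE n : f (ys n) = (F n)%:E by exact/fin_fineK/(ys_step n).1.1.
have step_le n : slope_step d f ys n <= ((F n - F n.+1) / q)%:E.
  apply: le_trans (lee_wpmul2r _ (G_le n)) _; first by rewrite lee_fin metric_ge0.
  have := (ys_step n).2; rewrite !FE -EFinD !lee_fin ler_pdivlMr // => desc.
  have -> : (lam_ n * d (ys n) (ys n.+1) * q = lam_ n.+1 * d (ys n) (ys n.+1))%R.
    by rewrite /lam_ exprSr; ring.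
  lra.
apply: (@le_trans _ _ (\sum_(0 <= n <oo) slope_step d f ys n)).
  apply: ereal_inf_lbound; exists ys => //; split => //.
  apply/fine_cvgP; split; first by apply: nearW => n; rewrite ge0_fin_numE
    ?global_slope_ge0 // (le_lt_trans (G_le n)) ?ltry.
  apply: (@squeeze_cvgr _ _ _ _ (fun=> 0%R) lam_).
  - apply: nearW => n /=; rewrite fine_ge0 ?global_slope_ge0 //= -lee_fin.
    by rewrite fineK ?G_le // ge0_fin_numE ?global_slope_ge0 // (le_lt_trans (G_le n)) ?ltry.
  - by apply/cvgrPdist_lt => e e0; apply: nearW => n; rewrite subrr normr0.
  - by rewrite -(mulr0 lam); apply: cvgMl_tmp; apply: cvg_expr; rewrite ger0_norm // ltW.
apply: lime_le; first exact: is_cvg_nneseries (fun n _ _ => slope_step_ge0 f dm ys n).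
apply: nearW => N; apply: le_trans (lee_sum _ (fun k _ => step_le k)) _.
rewrite sumEFin -mulr_suml (@telescope_sumr_eq _ _ _ (fun k => - F k)%R) //; last first.
  by move=> k _; rewrite opprK addrC.
have := f_ge0 (ys N); rewrite -ys0 !FE -EFinM !lee_fin ler_pM2r ?invr_gt0 //.
lra.
Qed.

Lemma I_fun_near_le x (r e : R) : f x != +oo -> (0 < r)%R -> (0 < e)%R ->
  exists2 y, (d y x < r)%R & I_fun d f y <= f x + e%:E.
Proof.
move=> fx r0 e0; rewrite fin_fineK //; set a := fine (f x).
have a0 : (0 <= a)%R := fine_ge0 (f_ge0 x).
(* lam * r > f x keeps the Ekeland point within r of x, and a / q <= a + e. *)
pose lam := ((a + 1) / r)%R.
have lam0 : (0 < lam)%R by rewrite divr_gt0 // ltr_wpDl.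
have [y xy y_min] := ekeland_principle dm f_ge0 lam0 f_lsc X_complete fx.
have fy_le := ekeland_set_le dm lam0 xy.
have fy : f y != +oo by rewrite -ltey (le_lt_trans fy_le) ?ltey.
pose q := ((a + 1) / (a + 1 + e))%R.
have q01 : (0 < q < 1)%R by rewrite divr_gt0 ?ltr_pdivrMr ?mul1r /=; lra.
exists y.
  move: xy; rewrite /ekeland_set /= [f y]fin_fineK // [f x]fin_fineK // -EFinD lee_fin.
  rewrite (metric_sym dm x y) -/a; have := fine_ge0 (f_ge0 y).
  have : (lam * r = a + 1)%R by rewrite divfK ?gt_eqF.
  nra.
apply: le_trans (I_fun_le_div fy lam0 q01 y_min) _.
rewrite [f x]fin_fineK // in fy_le.
apply: le_trans (lee_wpmul2r _ fy_le) _; first by rewrite lee_fin invr_ge0 ltW //; case/andP: q01.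
by rewrite -EFinM lee_fin invf_div mulrA ler_pdivrMr ?ltr_wpDl // -/a; nra.
Qed.

End Approximation.

Section LowerEnvelope.
Variables (R : realType) (X : Type) (d : X -> X -> R).

Lemma le_lsc_env (g h : X -> \bar R) x :
  (forall y, g y <= h y) -> lsc_env d g x <= lsc_env d h x.
Proof.
move=> gh; apply: ge_ereal_sup => _ [r r0 <-].
apply: le_trans (ereal_sup_ubound _); last by exists r.
apply: le_ereal_inf_tmp => _ [y yx <-].
by apply: le_trans (gh y); apply: ereal_inf_lbound; exists y.
Qed.

Lemma lsc_env_le (g : X -> \bar R) x a :
  (forall r, (0 < r)%R -> exists2 y, (d y x < r)%R & g y <= a) -> lsc_env d g x <= a.
Proof.
move=> near_a; apply: ge_ereal_sup => _ [r /near_a[y yx gy] <-].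
by apply: le_trans gy; apply: ereal_inf_lbound; exists y.
Qed.

End LowerEnvelope.

Unset Implicit Arguments.

Theorem theorem6p10 (R : realType) (X : Type) (d : X -> X -> R)
  (f : X -> \bar R) :
  is_metric d -> complete_metric d ->
  (forall x, f x != -oo) ->          (* f : X -> R u {+oo} *)
  (exists x, f x != +oo) ->           (* proper *)
  lsc_fun d f ->                      (* lower semicontinuous *)
  ereal_inf (range f) = 0 ->          (* inf_X f = 0 *)
  forall x, f x = lsc_env d (I_fun d f) x.
Proof.
move=> dm X_complete fNy _ f_lsc inf0 x.
have f_ge0 z : 0 <= f z by rewrite -inf0; apply: ereal_inf_lbound; exists z.
apply/eqP; rewrite eq_le; apply/andP; split.
  exact: le_trans (f_lsc x) (le_lsc_env d x (fun y => le_I_fun dm fNy y inf0)).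
have [->|fx] := eqVneq (f x) +oo; first exact: leey.
apply/lee_addgt0Pr => e e0; apply: lsc_env_le => r r0.
exact: I_fun_near_le.
Qed.
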